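(* For a parameter vector $(a_1,a_2,b_0,b_1,b_2,s_1,s_2)$ with $h_k=a_1q^k+a_2q^{-k}$ pairwise distinct (over $k\geq -1$), let $(\{\alpha_n\}_{n\geq1},\{\beta_n\}_{n\geq0})$ be the recurrence coefficient sequences defined from it. Let $P=(a_1,a_2,b_0,0,0,s_1,s_2)$. (i) If $a_2\neq 0$, then $P$ and $P_1=(a_1,a_2,b_0,b_1,0,\hat s_1,\hat s_2)$, where $b_1=-\frac{b_0a_2+s_2}{a_2}$, $\hat s_1=\frac{qs_1-b_0a_2-s_2}{q}$, $\hat s_2=-b_0a_2$, yield the same pair of sequences $(\alpha_n,\beta_n)$. (ii) If $a_1\neq 0$, then $P$ and $P_2=(a_1,a_2,b_0,0,b_2,\tilde s_1,\tilde s_2)$, where $b_2=-\frac{b_0a_1+s_1}{a_1}$, $\tilde s_1=-b_0a_1$, $\tilde s_2=s_2-qa_1b_0-qs_1$, yield the same pair of sequences $(\alpha_n,\beta_n)$.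
   Context: Fix $q\in\mathbb{C}$ with $q\neq 0$ and $|q|\neq 1$. Given a parameter vector $(a_1,a_2,b_0,b_1,b_2,s_1,s_2)\in\mathbb{C}^7$, put $s_0=-s_1-s_2$ and define for integers $k$: $x_k=b_0+b_1q^k+b_2q^{-k}$, $h_k=a_1q^k+a_2q^{-k}$, $d_k=s_0+s_1q^k+s_2q^{-k}$, $g_0=0$, $g_k=x_{k-1}(h_k-h_0)+d_k$ for $k\geq1$. The recurrence coefficients are $$\alpha_n=\frac{g_n}{h_{n-1}-h_n}\left(\frac{g_{n-1}}{h_{n-2}-h_n}-\frac{g_n}{h_{n-1}-h_n}+\frac{g_{n+1}}{h_{n-1}-h_{n+1}}+x_n-x_{n-1}\right),\ n\geq1,\qquad \beta_n=x_n+\frac{g_{n+1}}{h_n-h_{n+1}}-\frac{g_n}{h_{n-1}-h_n},\ n\geq0,$$ where any term containing the factor $g_0=0$ is taken to be $0$. (These are the coefficients of the three-term recurrence $u_{n+1}=(t-\beta_n)u_n-\alpha_nu_{n-1}$ satisfied by the monic polynomials $u_n$ determined by the parameters.) *)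

From mathcomp Require Import all_boot all_order all_algebra.
From mathcomp Require Import complex reals.
Set Implicit Arguments. Unset Strict Implicit. Unset Printing Implicit Defensive.
Import Order.TTheory GRing.Theory Num.Theory.
Local Open Scope ring_scope.

Section Coeffs.
Variables (C : fieldType) (q : C).
Variables (a1 a2 b0 b1 b2 s1 s2 : C).

Definition s0 : C := - s1 - s2.
Definition xk (k : int) : C := b0 + b1 * q ^ k + b2 * q ^ (- k).
Definition hk (k : int) : C := a1 * q ^ k + a2 * q ^ (- k).
Definition dk (k : int) : C := s0 + s1 * q ^ k + s2 * q ^ (- k).
Definition gk (k : nat) : C :=
  if k is 0%N then 0 else xk (k%:Z - 1) * (hk k%:Z - hk 0) + dk k%:Z.

(* alpha_n, n >= 1 ; terms with the factor g_0 = 0 vanish automatically *)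
Definition alpha (n : nat) : C :=
  let N := n%:Z in
  gk n / (hk (N - 1) - hk N) *
  (gk n.-1 / (hk (N - 2) - hk N) - gk n / (hk (N - 1) - hk N)
   + gk n.+1 / (hk (N - 1) - hk (N + 1)) + xk N - xk (N - 1)).

Definition beta (n : nat) : C :=
  let N := n%:Z in
  xk N + gk n.+1 / (hk N - hk (N + 1)) - gk n / (hk (N - 1) - hk N).
End Coeffs.

Definition same_sequences (C : fieldType) (q : C)
  (a1 a2 b0 b1 b2 s1 s2 a1' a2' b0' b1' b2' s1' s2' : C) : Prop :=
  (forall n : nat, (1 <= n)%N ->
     alpha q a1 a2 b0 b1 b2 s1 s2 n = alpha q a1' a2' b0' b1' b2' s1' s2' n) /\
  (forall n : nat,
     beta q a1 a2 b0 b1 b2 s1 s2 n = beta q a1' a2' b0' b1' b2' s1' s2' n).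

(* With A := b0 a1 + s1 and B := b0 a2 + s2, every g-sequence involved factors through
   q^k - 1:  g_k = (q^k - 1) (A - B q^-k) for P,  g_k = (q^k - 1) (A - a1 B q^(k-1) / a2)
   for P1, and g_k = (q^k - 1) (a2 A q^(1-2k) / a1 - B q^-k) for P2.  Hence alpha_n and
   beta_n are rational functions of u = q^n, and each invariance is an identity between
   them, checked by clearing denominators.  Since h_k - h_l = (q^k - q^l) (a1 - a2 q^(-k-l)),
   the distinctness of the h's is exactly the nonvanishing of those denominators. *)
From mathcomp Require Import all_boot all_order all_algebra.
From mathcomp Require Import complex reals.
From mathcomp Require Import ring zify.
Set Implicit Arguments. Unset Strict Implicit. Unset Printing Implicit Defensive.
Import Order.TTheory GRing.Theory Num.Theory.
Local Open Scope ring_scope.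

Section Coefficients.
Variables (C : fieldType) (q a1 a2 b0 b1 b2 s1 s2 : C).
Hypothesis q_neq0 : q != 0.

Lemma hk_sub k l :
  hk q a1 a2 k - hk q a1 a2 l = (q ^ k - q ^ l) * (a1 - a2 / (q ^ k * q ^ l)).
Proof.
have qk_neq0 (j : int) : q ^ j != 0 by rewrite expfz_neq0.
by rewrite /hk -!invr_expz; field; rewrite !qk_neq0.
Qed.

Lemma hk_neq k l : hk q a1 a2 k != hk q a1 a2 l ->
  q ^ k - q ^ l != 0 /\ a1 * (q ^ k * q ^ l) - a2 != 0.
Proof.
rewrite -subr_eq0 hk_sub mulf_eq0 negb_or => /andP[-> ne]; split=> //.
have z_neq0 : q ^ k * q ^ l != 0 by rewrite mulf_neq0 ?expfz_neq0.
set z := q ^ k * q ^ l in z_neq0 ne *.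
have -> : a1 * z - a2 = (a1 - a2 / z) * z by field.
by rewrite mulf_neq0.
Qed.

Lemma xkE k : xk q b0 b1 b2 k = b0 + b1 * q ^ k + b2 / q ^ k.
Proof. by rewrite /xk invr_expz. Qed.

Lemma dkE k : dk q s1 s2 k = - s1 - s2 + s1 * q ^ k + s2 / q ^ k.
Proof. by rewrite /dk invr_expz. Qed.

Definition gz (k : int) : C :=
  xk q b0 b1 b2 (k - 1) * (hk q a1 a2 k - hk q a1 a2 0) + dk q s1 s2 k.

Definition betaz (k : int) : C :=
  xk q b0 b1 b2 k + gz (k + 1) / (hk q a1 a2 k - hk q a1 a2 (k + 1))
  - gz k / (hk q a1 a2 (k - 1) - hk q a1 a2 k).

Definition alphaz (k : int) : C :=
  gz k / (hk q a1 a2 (k - 1) - hk q a1 a2 k) *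
  (gz (k - 1) / (hk q a1 a2 (k - 2) - hk q a1 a2 k)
   - gz k / (hk q a1 a2 (k - 1) - hk q a1 a2 k)
   + gz (k + 1) / (hk q a1 a2 (k - 1) - hk q a1 a2 (k + 1))
   + xk q b0 b1 b2 k - xk q b0 b1 b2 (k - 1)).

Lemma gk_gz n : gk q a1 a2 b0 b1 b2 s1 s2 n = gz n%:Z.
Proof. by case: n => [|n] //; rewrite /gk /gz /dk /s0 subrr oppr0 !expr0z; ring. Qed.

Lemma beta_betaz n : beta q a1 a2 b0 b1 b2 s1 s2 n = betaz n%:Z.
Proof. by rewrite /beta /betaz !gk_gz -addn1 PoszD. Qed.

Lemma alpha_alphaz n : alpha q a1 a2 b0 b1 b2 s1 s2 n.+1 = alphaz n.+1%:Z.
Proof.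
rewrite /alpha /alphaz -[n.+1.-1]/n !gk_gz -[n.+2]addn1 PoszD.
by have -> : n.+1%:Z - 1 = n by rewrite intS addrC addKr.
Qed.

End Coefficients.

(* Expand everything as rational functions of [u := q ^ j], [j] the lowest index
   involved; the side conditions of [field] are then literally the hypotheses. *)
Ltac field_in_lowest_power q j :=
  rewrite !addrK !expfzDr // ?expr1z ?expr0z;
  (have : q ^ j != 0 by rewrite expfz_neq0);
  set u := q ^ j => *;
  by field; repeat (apply/andP; split).

Section Gauge.
Variables (C : fieldType) (q a1 a2 b0 s1 s2 : C).
Hypothesis q_neq0 : q != 0.

Lemma betaz_gauge_b1 k : a2 != 0 ->
  hk q a1 a2 (k - 1) != hk q a1 a2 k -> hk q a1 a2 k != hk q a1 a2 (k + 1) ->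
  betaz q a1 a2 b0 0 0 s1 s2 k =
  betaz q a1 a2 b0 (- ((b0 * a2 + s2) / a2)) 0
    ((q * s1 - b0 * a2 - s2) / q) (- (b0 * a2)) k.
Proof.
move=> a2_neq0 /(hk_neq q_neq0)[F1 F2] /(hk_neq q_neq0)[F3 F4].
rewrite /betaz /gz !hk_sub // !xkE !dkE.
move: F1 F2 F3 F4; rewrite -[k](subrK 1); move: (k - 1) => j.
field_in_lowest_power q j.
Qed.

Lemma alphaz_gauge_b1 k : a2 != 0 ->
  hk q a1 a2 (k - 1) != hk q a1 a2 k -> hk q a1 a2 (k - 2) != hk q a1 a2 k ->
  hk q a1 a2 (k - 1) != hk q a1 a2 (k + 1) ->
  alphaz q a1 a2 b0 0 0 s1 s2 k =
  alphaz q a1 a2 b0 (- ((b0 * a2 + s2) / a2)) 0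
    ((q * s1 - b0 * a2 - s2) / q) (- (b0 * a2)) k.
Proof.
move=> a2_neq0 /(hk_neq q_neq0)[F1 F2] /(hk_neq q_neq0)[F3 F4] /(hk_neq q_neq0)[F5 F6].
rewrite /alphaz /gz !hk_sub // !xkE !dkE.
move: F1 F2 F3 F4 F5 F6; have -> : k - 2 = k - 1 - 1 by rewrite -addrA -opprD.
rewrite -[k](subrK 1) -[k - 1](subrK 1); move: (k - 1 - 1) => j.
field_in_lowest_power q j.
Qed.

Lemma betaz_gauge_b2 k : a1 != 0 ->
  hk q a1 a2 (k - 1) != hk q a1 a2 k -> hk q a1 a2 k != hk q a1 a2 (k + 1) ->
  betaz q a1 a2 b0 0 0 s1 s2 k =
  betaz q a1 a2 b0 0 (- ((b0 * a1 + s1) / a1))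
    (- (b0 * a1)) (s2 - q * a1 * b0 - q * s1) k.
Proof.
move=> a1_neq0 /(hk_neq q_neq0)[F1 F2] /(hk_neq q_neq0)[F3 F4].
rewrite /betaz /gz !hk_sub // !xkE !dkE.
move: F1 F2 F3 F4; rewrite -[k](subrK 1); move: (k - 1) => j.
field_in_lowest_power q j.
Qed.

Lemma alphaz_gauge_b2 k : a1 != 0 ->
  hk q a1 a2 (k - 1) != hk q a1 a2 k -> hk q a1 a2 (k - 2) != hk q a1 a2 k ->
  hk q a1 a2 (k - 1) != hk q a1 a2 (k + 1) ->
  alphaz q a1 a2 b0 0 0 s1 s2 k =
  alphaz q a1 a2 b0 0 (- ((b0 * a1 + s1) / a1))
    (- (b0 * a1)) (s2 - q * a1 * b0 - q * s1) k.
Proof.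
move=> a1_neq0 /(hk_neq q_neq0)[F1 F2] /(hk_neq q_neq0)[F3 F4] /(hk_neq q_neq0)[F5 F6].
rewrite /alphaz /gz !hk_sub // !xkE !dkE.
move: F1 F2 F3 F4 F5 F6; have -> : k - 2 = k - 1 - 1 by rewrite -addrA -opprD.
rewrite -[k](subrK 1) -[k - 1](subrK 1); move: (k - 1 - 1) => j.
field_in_lowest_power q j.
Qed.

End Gauge.

Local Open Scope complex_scope.

Theorem mainTheorem9 (R : realType) (q a1 a2 b0 s1 s2 : R[i]) :
  q != 0 -> `|q| != 1 ->
  (forall k l : int, -1 <= k -> -1 <= l -> k != l ->
     hk q a1 a2 k != hk q a1 a2 l) ->
  (a2 != 0 ->
     same_sequences q a1 a2 b0 0 0 s1 s2
       a1 a2 b0 (- ((b0 * a2 + s2) / a2)) 0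
       ((q * s1 - b0 * a2 - s2) / q) (- (b0 * a2))) /\
  (a1 != 0 ->
     same_sequences q a1 a2 b0 0 0 s1 s2
       a1 a2 b0 0 (- ((b0 * a1 + s1) / a1))
       (- (b0 * a1)) (s2 - q * a1 * b0 - q * s1)).
Proof.
move=> q_neq0 _ hk_inj.
split=> a_neq0; split=> [[|n] // _|n]; rewrite ?alpha_alphaz ?beta_betaz.
- by apply: alphaz_gauge_b1 => //; apply: hk_inj; lia.
- by apply: betaz_gauge_b1 => //; apply: hk_inj; lia.
- by apply: alphaz_gauge_b2 => //; apply: hk_inj; lia.
- by apply: betaz_gauge_b2 => //; apply: hk_inj; lia.
Qed.
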